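(* Let $(\omega,c)\in\mathbb{R}^2$ satisfy: $\omega>c^2/4$, or $\omega=c^2/4$ and $c>0$. Then the function $(\alpha_0,\alpha_1)\ni\eta_3\mapsto T_\psi(\eta_3)\in(0,\infty)$ is strictly increasing, where $$T_\psi(\eta_3)=\frac{8}{\sqrt{\eta_3\sqrt{A(\eta_3)}}}\,K(k(\eta_3)).$$
   Context: $\alpha_0=\tfrac13(4c+\sqrt{48\omega+4c^2})$, $\alpha_1=4\sqrt\omega+2c$, $A(x)=-3x^2+8cx+64\omega$ (positive on $(\alpha_0,\alpha_1)$). For $\eta_3\in(\alpha_0,\alpha_1)$: $\eta_1=\frac{-\eta_3+4c-\sqrt{A(\eta_3)}}{2}$, $\eta_2=\frac{-\eta_3+4c+\sqrt{A(\eta_3)}}{2}$ (so $\eta_3(\eta_2-\eta_1)=\eta_3\sqrt{A(\eta_3)}$), and $k(\eta_3)^2=\frac{-\eta_1(\eta_3-\eta_2)}{\eta_3(\eta_2-\eta_1)}\in(0,1)$. $K(k)=\int_0^{\pi/2}(1-k^2\sin^2\theta)^{-1/2}d\theta$ is the complete elliptic integral of the first kind. $T_\psi$ is the fundamental period of the periodic solution $\psi=\Phi^2$ with maximum $\eta_3$. *)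

From Stdlib Require Import Reals.
From Coquelicot Require Import Coquelicot.
Open Scope R_scope.

Definition alpha0 (omega c : R) : R := (4 * c + sqrt (48 * omega + 4 * c ^ 2)) / 3.
Definition alpha1 (omega c : R) : R := 4 * sqrt omega + 2 * c.
Definition Apoly (omega c x : R) : R := - 3 * x ^ 2 + 8 * c * x + 64 * omega.

Definition eta1 (omega c e3 : R) : R := (- e3 + 4 * c - sqrt (Apoly omega c e3)) / 2.
Definition eta2 (omega c e3 : R) : R := (- e3 + 4 * c + sqrt (Apoly omega c e3)) / 2.

Definition ksq (omega c e3 : R) : R :=
  - eta1 omega c e3 * (e3 - eta2 omega c e3) / (e3 * (eta2 omega c e3 - eta1 omega c e3)).

(* k(eta3), the modulus (k^2 lies in (0,1) on the relevant interval) *)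
Definition kmod (omega c e3 : R) : R := sqrt (ksq omega c e3).

Definition ellipticK (k : R) : R :=
  RInt (fun theta => / sqrt (1 - k ^ 2 * (sin theta) ^ 2)) 0 (PI / 2).

Definition Tpsi (omega c e3 : R) : R :=
  8 / sqrt (e3 * sqrt (Apoly omega c e3)) * ellipticK (kmod omega c e3).

From Stdlib Require Import Reals Lra Psatz.
From Coquelicot Require Import Coquelicot.
Open Scope R_scope.

(* Put a = η3 (η2 - η1) and b = η2 (η3 - η1).  Since k^2 = (a - b) / a, Legendre's form of K
   gives T = 8 J(a, b) with J(a, b) = ∫_0^(π/2) dθ / sqrt (a cos^2 θ + b sin^2 θ).  Gauss's
   AGM transformation J(a, b) = J(((√a + √b)/2)^2, √(ab)) shows that J is strictly decreasing
   jointly in a + b and ab.  On (α0, α1) both a + b and ab strictly decrease in η3: their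
   derivatives are -3 (η3 - η2)(η3 + η2 - η1) / √A and -(η3 - η2) Q / √A, where Q is a
   polynomial with positive coefficients in η2, -η1 and η3 - η2, and η1 < 0 < η2 < η3. *)

Lemma sin2_cos2_pow (t : R) : sin t ^ 2 + cos t ^ 2 = 1.
Proof. rewrite <- (sin2_cos2 t); unfold Rsqr; ring. Qed.

Lemma sin_cos_2atan (x : R) :
  sin (2 * atan x) = 2 * x / (1 + x ^ 2) /\ cos (2 * atan x) = (1 - x ^ 2) / (1 + x ^ 2).
Proof.
  rewrite sin_2a, cos_2a, sin_atan, cos_atan.
  assert (0 < 1 + x²) by (unfold Rsqr; nra).
  assert (0 < sqrt (1 + x²)) by (apply sqrt_lt_R0; lra).
  assert (Hr : sqrt (1 + x²) * sqrt (1 + x²) = 1 + x²) by (apply sqrt_sqrt; lra).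
  set (r := sqrt (1 + x²)) in *; clearbody r.
  replace (x ^ 2) with (x²) by (unfold Rsqr; ring).
  rewrite <- Hr; unfold Rsqr; split; field; lra.
Qed.

Lemma RInt_even (f : R -> R) (a : R) :
  (forall t, f (- t) = f t) -> ex_RInt f (- a) 0 -> ex_RInt f 0 a ->
  RInt f (- a) a = 2 * RInt f 0 a.
Proof.
  intros Hf Hl Hr.
  assert (Hflip : RInt f 0 (- a) = - RInt f 0 a).
  { pose proof (RInt_comp_lin f (-1) 0 0 a) as E.
    replace (-1 * 0 + 0) with 0 in E by ring. replace (-1 * a + 0) with (- a) in E by ring.
    rewrite <- E by (apply ex_RInt_swap; exact Hl).
    rewrite <- (RInt_opp f) by exact Hr.
    apply RInt_ext; intros t _; replace (-1 * t + 0) with (- t) by ring; rewrite Hf.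
    change (-1 * f t = - f t); ring. }
  rewrite <- (RInt_Chasles f (- a) 0 a Hl Hr).
  rewrite <- (opp_RInt_swap f) by (apply ex_RInt_swap; exact Hl).
  rewrite Hflip.
  change (- - RInt f 0 a + RInt f 0 a = 2 * RInt f 0 a); ring.
Qed.

Lemma strict_decreasing_of_derive_neg (f df : R -> R) (a b : R) :
  (forall x, a < x < b -> is_derive f x (df x)) ->
  (forall x, a < x < b -> df x < 0) ->
  forall x y, a < x -> x < y -> y < b -> f y < f x.
Proof.
  intros Hd Hneg x y Hx Hxy Hy.
  enough (- f x < - f y) by lra.
  apply (incr_function (fun z => - f z) a b (fun z => - df z)); simpl; try lra.
  - intros z Ha Hb; apply (is_derive_opp f); apply Hd; lra.
  - intros z Ha Hb; specialize (Hneg z (conj Ha Hb)); lra.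
Qed.

(* Gauss's I(√A, √B): the arguments are the squares of the usual AGM arguments. *)
Definition agm_integrand (A B t : R) : R := / sqrt (A * cos t ^ 2 + B * sin t ^ 2).

Definition agm_integral (A B : R) : R := RInt (agm_integrand A B) 0 (PI / 2).

Lemma trig_comb_pos (A B t : R) : 0 < A -> 0 < B -> 0 < A * cos t ^ 2 + B * sin t ^ 2.
Proof.
  intros HA HB.
  assert (0 < Rmin A B) by (apply Rmin_glb_lt; lra).
  pose proof (Rmin_l A B); pose proof (Rmin_r A B); pose proof (sin2_cos2_pow t).
  nra.
Qed.

Lemma agm_integrand_continuous (A B t : R) :
  0 < A -> 0 < B -> continuous (agm_integrand A B) t.
Proof.
  intros HA HB; apply (@ex_derive_continuous R_AbsRing R_NormedModule).
  pose proof (trig_comb_pos A B t HA HB).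
  unfold agm_integrand; auto_derive.
  split; [nra | split; [apply Rgt_not_eq, sqrt_lt_R0; nra | exact I]].
Qed.

Lemma ex_RInt_agm_integrand (A B a b : R) :
  0 < A -> 0 < B -> ex_RInt (agm_integrand A B) a b.
Proof.
  intros HA HB; apply (@ex_RInt_continuous R_CompleteNormedModule).
  intros; now apply agm_integrand_continuous.
Qed.

Lemma agm_integral_lt (A B A' B' : R) :
  0 < A' -> A' < A -> 0 < B' -> B' < B -> agm_integral A B < agm_integral A' B'.
Proof.
  intros HA' HA HB' HB; pose proof PI_RGT_0.
  apply RInt_lt; [lra | intros; apply agm_integrand_continuous; lra ..|].
  intros t _; unfold agm_integrand.
  pose proof (trig_comb_pos A' B' t HA' HB').
  pose proof (trig_comb_pos (A - A') (B - B') t ltac:(lra) ltac:(lra)).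
  apply Rinv_lt_contravar.
  - apply Rmult_lt_0_compat; apply sqrt_lt_R0; lra.
  - apply sqrt_lt_1; lra.
Qed.

Lemma ellipticK_agm_integral (A B : R) :
  0 < B <= A -> ellipticK (sqrt ((A - B) / A)) = sqrt A * agm_integral A B.
Proof.
  intros HB.
  assert (HsA : 0 < sqrt A) by (apply sqrt_lt_R0; lra).
  unfold ellipticK, agm_integral.
  rewrite <- (RInt_scal _ _ _ _ (ex_RInt_agm_integrand A B 0 (PI / 2) ltac:(lra) ltac:(lra))).
  apply RInt_ext; intros t _.
  rewrite pow2_sqrt by (apply Rmult_le_pos; [lra | apply Rlt_le, Rinv_0_lt_compat; lra]).
  assert (E : A * cos t ^ 2 + B * sin t ^ 2 = A * (1 - (A - B) / A * sin t ^ 2)).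
  { pose proof (sin2_cos2_pow t); field_simplify; [nra | lra]. }
  pose proof (trig_comb_pos A B t ltac:(lra) ltac:(lra)).
  assert (0 < 1 - (A - B) / A * sin t ^ 2) by nra.
  change (scal (sqrt A) (agm_integrand A B t)) with (sqrt A * agm_integrand A B t).
  unfold agm_integrand; rewrite E, sqrt_mult by lra.
  rewrite Rinv_mult, <- Rmult_assoc, Rinv_r, Rmult_1_l; lra.
Qed.

Lemma agm_integrand_even (A B t : R) : agm_integrand A B (- t) = agm_integrand A B t.
Proof. unfold agm_integrand; rewrite cos_neg, sin_neg; f_equal; f_equal; ring. Qed.

(* For |t| < PI/2 this is Gauss's substitution 2 atan ((v/u) tan t) - PI/2, rewritten through
   tan (x - t) so that it is smooth on all of R and maps [0, PI/2] onto [-PI/2, PI/2]. *)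
Definition gauss_angle (u v t : R) : R :=
  2 * t + 2 * atan ((v - u) * sin t * cos t / (u * cos t ^ 2 + v * sin t ^ 2)) - PI / 2.

Section Gauss_transformation.

Variables u v : R.
Hypotheses (Hu : 0 < u) (Hv : 0 < v).

Lemma gauss_angle_0 : gauss_angle u v 0 = - (PI / 2).
Proof. unfold gauss_angle, Rdiv; rewrite sin_0, !Rmult_0_r, !Rmult_0_l, atan_0; ring. Qed.

Lemma gauss_angle_PI2 : gauss_angle u v (PI / 2) = PI / 2.
Proof.
  unfold gauss_angle; rewrite cos_PI2; unfold Rdiv.
  rewrite !Rmult_0_r, Rmult_0_l, atan_0; field.
Qed.

Lemma is_derive_gauss_angle (t : R) :
  is_derive (gauss_angle u v) t (2 * u * v / (u ^ 2 * cos t ^ 2 + v ^ 2 * sin t ^ 2)).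
Proof.
  pose proof (trig_comb_pos u v t Hu Hv).
  pose proof (trig_comb_pos (u ^ 2) (v ^ 2) t (pow_lt _ _ Hu) (pow_lt _ _ Hv)).
  unfold gauss_angle; auto_derive; [lra|].
  transitivity (2 * u * v * (sin t ^ 2 + cos t ^ 2) / (u ^ 2 * cos t ^ 2 + v ^ 2 * sin t ^ 2)).
  - field; repeat split; nra.
  - now rewrite sin2_cos2_pow, Rmult_1_r.
Qed.

Lemma cos_sin_gauss_angle (t : R) :
  cos (gauss_angle u v t)
    = 2 * u * v * sin t * cos t / (u ^ 2 * cos t ^ 2 + v ^ 2 * sin t ^ 2) /\
  sin (gauss_angle u v t)
    = (v ^ 2 * sin t ^ 2 - u ^ 2 * cos t ^ 2) / (u ^ 2 * cos t ^ 2 + v ^ 2 * sin t ^ 2).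
Proof.
  pose proof (trig_comb_pos u v t Hu Hv).
  pose proof (trig_comb_pos (u ^ 2) (v ^ 2) t (pow_lt _ _ Hu) (pow_lt _ _ Hv)).
  unfold gauss_angle.
  set (w := (v - u) * sin t * cos t / (u * cos t ^ 2 + v * sin t ^ 2)).
  destruct (sin_cos_2atan w) as [Hs Hc].
  rewrite cos_minus, sin_minus, cos_PI2, sin_PI2, sin_plus, cos_plus, sin_2a, cos_2a, Hs, Hc.
  unfold w. split.
  - transitivity (2 * u * v * sin t * cos t * (sin t ^ 2 + cos t ^ 2)
                  / (u ^ 2 * cos t ^ 2 + v ^ 2 * sin t ^ 2)).
    + field; repeat split; nra.
    + now rewrite sin2_cos2_pow, Rmult_1_r.
  - transitivity ((v ^ 2 * sin t ^ 2 - u ^ 2 * cos t ^ 2) * (sin t ^ 2 + cos t ^ 2)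
                  / (u ^ 2 * cos t ^ 2 + v ^ 2 * sin t ^ 2)).
    + field; repeat split; nra.
    + now rewrite sin2_cos2_pow, Rmult_1_r.
Qed.

Lemma agm_integrand_gauss_angle (t : R) :
  agm_integrand (((u ^ 2 + v ^ 2) / 2) ^ 2) ((u * v) ^ 2) (gauss_angle u v t)
    * (2 * u * v / (u ^ 2 * cos t ^ 2 + v ^ 2 * sin t ^ 2))
  = 2 * agm_integrand (u ^ 4) (v ^ 4) t.
Proof.
  pose proof (trig_comb_pos (u ^ 2) (v ^ 2) t (pow_lt _ _ Hu) (pow_lt _ _ Hv)) as HD.
  pose proof (trig_comb_pos (u ^ 4) (v ^ 4) t (pow_lt _ _ Hu) (pow_lt _ _ Hv)) as HW.
  set (D := u ^ 2 * cos t ^ 2 + v ^ 2 * sin t ^ 2) in *.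
  set (W := u ^ 4 * cos t ^ 2 + v ^ 4 * sin t ^ 2) in *.
  destruct (cos_sin_gauss_angle t) as [Hc Hs].
  assert (E : ((u ^ 2 + v ^ 2) / 2) ^ 2 * cos (gauss_angle u v t) ^ 2
              + (u * v) ^ 2 * sin (gauss_angle u v t) ^ 2 = (u * v / D) ^ 2 * W).
  { rewrite Hc, Hs.
    transitivity ((u * v / D) ^ 2 * W * (sin t ^ 2 + cos t ^ 2)).
    - unfold D, W; field; apply Rgt_not_eq; rewrite !Rpow_mult_distr; exact HD.
    - now rewrite sin2_cos2_pow, Rmult_1_r. }
  unfold agm_integrand; fold W; rewrite E, sqrt_mult, sqrt_pow2.
  - assert (0 < sqrt W) by (apply sqrt_lt_R0; lra).
    field; repeat split; nra.
  - apply Rlt_le, Rdiv_lt_0_compat; nra.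
  - apply pow2_ge_0.
  - lra.
Qed.

Lemma agm_integral_gauss_pow :
  agm_integral (u ^ 4) (v ^ 4) = agm_integral (((u ^ 2 + v ^ 2) / 2) ^ 2) ((u * v) ^ 2).
Proof.
  set (A := ((u ^ 2 + v ^ 2) / 2) ^ 2); set (B := (u * v) ^ 2).
  assert (HA : 0 < A) by (unfold A; apply pow_lt; nra).
  assert (HB : 0 < B) by (unfold B; apply pow_lt; nra).
  assert (Hsubst : RInt (fun t => 2 * agm_integrand (u ^ 4) (v ^ 4) t) 0 (PI / 2)
                   = RInt (agm_integrand A B) (- (PI / 2)) (PI / 2)).
  { transitivity (RInt (agm_integrand A B) (gauss_angle u v 0) (gauss_angle u v (PI / 2)));
      [| now rewrite gauss_angle_0, gauss_angle_PI2].
    rewrite <- (RInt_comp (agm_integrand A B) (gauss_angle u v)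
                  (fun t => 2 * u * v / (u ^ 2 * cos t ^ 2 + v ^ 2 * sin t ^ 2))).
    - apply RInt_ext; intros t _.
      rewrite <- agm_integrand_gauss_angle; apply Rmult_comm.
    - intros; apply agm_integrand_continuous; assumption.
    - intros t _; split; [apply is_derive_gauss_angle|].
      apply (@ex_derive_continuous R_AbsRing R_NormedModule).
      pose proof (trig_comb_pos (u ^ 2) (v ^ 2) t (pow_lt _ _ Hu) (pow_lt _ _ Hv)).
      auto_derive; lra. }
  rewrite RInt_even in Hsubst by
    (intros; apply agm_integrand_even || apply ex_RInt_agm_integrand; assumption).
  assert (Hscal : RInt (fun t => 2 * agm_integrand (u ^ 4) (v ^ 4) t) 0 (PI / 2)
                  = 2 * agm_integral (u ^ 4) (v ^ 4))
    by exact (RInt_scal _ _ _ 2 (ex_RInt_agm_integrand _ _ _ _ (pow_lt _ _ Hu) (pow_lt _ _ Hv))).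
  unfold agm_integral in *; lra.
Qed.

End Gauss_transformation.

Lemma agm_integral_gauss (a b : R) :
  0 < a -> 0 < b ->
  agm_integral a b = agm_integral ((a + b + 2 * sqrt (a * b)) / 4) (sqrt (a * b)).
Proof.
  intros Ha Hb.
  assert (Hroot : forall x, 0 < x ->
            0 < sqrt (sqrt x) /\ sqrt (sqrt x) ^ 2 = sqrt x /\ sqrt (sqrt x) ^ 4 = x).
  { intros x Hx; assert (0 < sqrt x) by (apply sqrt_lt_R0; lra).
    split; [apply sqrt_lt_R0; lra|].
    rewrite (pow2_sqrt (sqrt x)) by lra; split; [reflexivity|].
    change 4%nat with (2 * 2)%nat; rewrite pow_mult, pow2_sqrt, pow2_sqrt; lra. }
  destruct (Hroot a Ha) as (Hp & Hp2 & Hp4), (Hroot b Hb) as (Hq & Hq2 & Hq4).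
  pose proof (agm_integral_gauss_pow _ _ Hp Hq) as G.
  rewrite Hp4, Hq4, Rpow_mult_distr, Hp2, Hq2, <- sqrt_mult in G by lra.
  rewrite G; f_equal.
  pose proof (sqrt_sqrt a (Rlt_le _ _ Ha)); pose proof (sqrt_sqrt b (Rlt_le _ _ Hb)).
  rewrite sqrt_mult by lra; field_simplify; nra.
Qed.

Lemma agm_integral_lt_of_sum_prod (a b a' b' : R) :
  0 < a' -> 0 < b' -> a' + b' < a + b -> a' * b' < a * b ->
  agm_integral a b < agm_integral a' b'.
Proof.
  intros Ha' Hb' Hsum Hprod.
  assert (0 < a' * b') by nra.
  assert (0 < a /\ 0 < b) by nra.
  assert (Hsqrt : sqrt (a' * b') < sqrt (a * b)) by (apply sqrt_lt_1; lra).
  assert (0 < sqrt (a' * b')) by (apply sqrt_lt_R0; lra).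
  rewrite (agm_integral_gauss a b), (agm_integral_gauss a' b') by lra.
  apply agm_integral_lt; lra.
Qed.

(* In the paper's notation period_a = η3 (η2 - η1) and period_b = η2 (η3 - η1). *)
Definition period_a (omega c e : R) : R := e * sqrt (Apoly omega c e).
Definition period_b (omega c e : R) : R := eta2 omega c e * (e - eta1 omega c e).

Definition period_prod_slope (p r t : R) : R :=
  r * t ^ 2 + 2 * r ^ 2 * t + r ^ 3 + 3 * p * t ^ 2 + 9 * p * r * t
  + 4 * p * r ^ 2 + 9 * p ^ 2 * t + 9 * p ^ 2 * r + 6 * p ^ 3.

Lemma period_prod_slope_pos (p r t : R) : 0 < p -> 0 < r -> 0 < t -> 0 < period_prod_slope p r t.
Proof.
  intros; unfold period_prod_slope.
  repeat (apply Rplus_lt_0_compat || apply Rmult_lt_0_compat || apply pow_lt); lra.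
Qed.

Section Period.

Variables omega c : R.
Hypothesis Homega : c ^ 2 / 4 <= omega.

(* Apoly - (e - 4c)^2 = 4 (16 omega - (e - 2c)^2), and (3e - 4c)^2 - Apoly is
   4 (3e^2 - 8ce + 4c^2 - 16 omega), whose larger root is alpha0. *)
Lemma Apoly_bounds (e : R) :
  alpha0 omega c < e < alpha1 omega c ->
  0 < e /\ 4 * c < 3 * e /\ (e - 4 * c) ^ 2 < Apoly omega c e < (3 * e - 4 * c) ^ 2.
Proof.
  unfold alpha0, alpha1, Apoly; intros He.
  assert (HU : sqrt (48 * omega + 4 * c ^ 2) ^ 2 = 48 * omega + 4 * c ^ 2)
    by (apply pow2_sqrt; nra).
  assert (HV : sqrt omega ^ 2 = omega) by (apply pow2_sqrt; nra).
  pose proof (sqrt_pos (48 * omega + 4 * c ^ 2)); pose proof (sqrt_pos omega).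
  set (U := sqrt (48 * omega + 4 * c ^ 2)) in *; set (V := sqrt omega) in *.
  clearbody U V.
  assert (- 4 * c <= U) by nra.
  assert (Hlow : 2 * c - 4 * V < e).
  { destruct (Rle_dec (2 * c - 12 * V) 0); [lra|].
    assert (0 <= 48 * V * (c - 2 * V)) by (apply Rmult_le_pos; nra). nra. }
  repeat split; nra.
Qed.

Lemma eta_bounds (e : R) :
  alpha0 omega c < e < alpha1 omega c ->
  0 < e /\ 0 < Apoly omega c e /\ eta1 omega c e < 0 < eta2 omega c e /\ eta2 omega c e < e.
Proof.
  intros He; destruct (Apoly_bounds e He) as (He0 & H3e & Hlow & Hup).
  assert (HA : 0 < Apoly omega c e) by (pose proof (pow2_ge_0 (e - 4 * c)); lra).
  assert (HS : sqrt (Apoly omega c e) ^ 2 = Apoly omega c e) by (apply pow2_sqrt; lra).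
  pose proof (sqrt_pos (Apoly omega c e)).
  unfold eta1, eta2; set (S := sqrt (Apoly omega c e)) in *; clearbody S.
  assert (e - 4 * c < S /\ 4 * c - e < S) by (split; nra).
  assert (S < 3 * e - 4 * c) by nra.
  repeat split; lra.
Qed.

Lemma period_a_sub_b (e : R) :
  period_a omega c e - period_b omega c e = - eta1 omega c e * (e - eta2 omega c e).
Proof. unfold period_a, period_b, eta1, eta2; field. Qed.

Lemma period_b_pos_lt_a (e : R) :
  alpha0 omega c < e < alpha1 omega c -> 0 < period_b omega c e < period_a omega c e.
Proof.
  intros He; destruct (eta_bounds e He) as (He0 & HA & [H1 H2] & H3).
  pose proof (period_a_sub_b e); unfold period_b in *; split; nra.
Qed.

Lemma Tpsi_agm_integral (e : R) :
  alpha0 omega c < e < alpha1 omega c ->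
  Tpsi omega c e = 8 * agm_integral (period_a omega c e) (period_b omega c e).
Proof.
  intros He; pose proof (period_b_pos_lt_a e He) as Hab.
  assert (Hk : ksq omega c e = (period_a omega c e - period_b omega c e) / period_a omega c e).
  { unfold ksq; rewrite period_a_sub_b.
    replace (eta2 omega c e - eta1 omega c e) with (sqrt (Apoly omega c e))
      by (unfold eta1, eta2; field).
    reflexivity. }
  unfold Tpsi, kmod; rewrite Hk, ellipticK_agm_integral by lra.
  assert (0 < sqrt (period_a omega c e)) by (apply sqrt_lt_R0; lra).
  fold (period_a omega c e); field; lra.
Qed.

Lemma is_derive_period_sum (e : R) :
  0 < Apoly omega c e ->
  is_derive (fun x => period_a omega c x + period_b omega c x) e
    (- (3 * (e - eta2 omega c e) * (e + eta2 omega c e - eta1 omega c e)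
        / sqrt (Apoly omega c e))).
Proof.
  intros HA; unfold period_a, period_b, eta1, eta2, Apoly in *.
  auto_derive; [lra|].
  assert (HS : 0 < sqrt (-3 * e ^ 2 + 8 * c * e + 64 * omega)) by (apply sqrt_lt_R0; lra).
  assert (HS2 : sqrt (-3 * e ^ 2 + 8 * c * e + 64 * omega) ^ 2
                = -3 * e ^ 2 + 8 * c * e + 64 * omega) by (apply pow2_sqrt; lra).
  replace (-3 * (e * (e * 1)) + 8 * c * e + 64 * omega) with (-3 * e ^ 2 + 8 * c * e + 64 * omega)
    by ring.
  set (S := sqrt (-3 * e ^ 2 + 8 * c * e + 64 * omega)) in *; clearbody S.
  (* Eliminating omega in favour of S leaves a rational identity in e, c and S. *)
  replace omega with ((S ^ 2 + 3 * e ^ 2 - 8 * c * e) / 64) by lra.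
  field; lra.
Qed.

Lemma is_derive_period_prod (e : R) :
  0 < Apoly omega c e ->
  is_derive (fun x => period_a omega c x * period_b omega c x) e
    (- ((e - eta2 omega c e)
        * period_prod_slope (eta2 omega c e) (- eta1 omega c e) (e - eta2 omega c e)
        / sqrt (Apoly omega c e))).
Proof.
  intros HA; unfold period_a, period_b, period_prod_slope, eta1, eta2, Apoly in *.
  auto_derive; [lra|].
  assert (HS : 0 < sqrt (-3 * e ^ 2 + 8 * c * e + 64 * omega)) by (apply sqrt_lt_R0; lra).
  assert (HS2 : sqrt (-3 * e ^ 2 + 8 * c * e + 64 * omega) ^ 2
                = -3 * e ^ 2 + 8 * c * e + 64 * omega) by (apply pow2_sqrt; lra).
  replace (-3 * (e * (e * 1)) + 8 * c * e + 64 * omega) with (-3 * e ^ 2 + 8 * c * e + 64 * omega)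
    by ring.
  set (S := sqrt (-3 * e ^ 2 + 8 * c * e + 64 * omega)) in *; clearbody S.
  replace omega with ((S ^ 2 + 3 * e ^ 2 - 8 * c * e) / 64) by lra.
  field; lra.
Qed.

Lemma period_sum_prod_decreasing (x y : R) :
  alpha0 omega c < x -> x < y -> y < alpha1 omega c ->
  period_a omega c y + period_b omega c y < period_a omega c x + period_b omega c x /\
  period_a omega c y * period_b omega c y < period_a omega c x * period_b omega c x.
Proof.
  intros Hx Hxy Hy; split.
  - apply (strict_decreasing_of_derive_neg
             (fun e => period_a omega c e + period_b omega c e) _ _ _ (fun e He =>
              is_derive_period_sum e (proj1 (proj2 (eta_bounds e He))))); [|lra ..].
    intros e He; destruct (eta_bounds e He) as (He0 & HA & [H1 H2] & H3).
    enough (0 < 3 * (e - eta2 omega c e) * (e + eta2 omega c e - eta1 omega c e)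
                / sqrt (Apoly omega c e)) by lra.
    apply Rdiv_lt_0_compat; [|apply sqrt_lt_R0; lra].
    apply Rmult_lt_0_compat; lra.
  - apply (strict_decreasing_of_derive_neg
             (fun e => period_a omega c e * period_b omega c e) _ _ _ (fun e He =>
              is_derive_period_prod e (proj1 (proj2 (eta_bounds e He))))); [|lra ..].
    intros e He; destruct (eta_bounds e He) as (He0 & HA & [H1 H2] & H3).
    enough (0 < (e - eta2 omega c e)
                * period_prod_slope (eta2 omega c e) (- eta1 omega c e) (e - eta2 omega c e)
                / sqrt (Apoly omega c e)) by lra.
    apply Rdiv_lt_0_compat; [|apply sqrt_lt_R0; lra].
    apply Rmult_lt_0_compat; [lra | apply period_prod_slope_pos; lra].
Qed.

End Period.

Theorem proposition3p7 (omega c : R) :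
  (omega > c ^ 2 / 4 \/ (omega = c ^ 2 / 4 /\ c > 0)) ->
  forall x y : R,
    alpha0 omega c < x -> x < y -> y < alpha1 omega c ->
    Tpsi omega c x < Tpsi omega c y.
Proof.
  intros Hwc x y Hx Hxy Hy.
  assert (Homega : c ^ 2 / 4 <= omega) by (destruct Hwc as [| []]; lra).
  destruct (period_b_pos_lt_a omega c Homega y ltac:(lra)) as [Hb Hab].
  destruct (period_sum_prod_decreasing omega c Homega x y Hx Hxy Hy) as [Hsum Hprod].
  rewrite !Tpsi_agm_integral by (assumption || lra).
  apply Rmult_lt_compat_l; [lra|].
  apply agm_integral_lt_of_sum_prod; lra.
Qed.
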